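(* Let $G$ be a Carnot group, let $D_G$ be the dimension provided by the theorem that for every $0<\varepsilon<1/2$, $(G,d_G^{1-\varepsilon})$ embeds into $\mathbb{R}^{D_G}$ with distortion $O_G(\varepsilon^{-1/2})$. Let $\Gamma\subset G$ be a discrete subgroup such that $d_G(\gamma_1,\gamma_2)\ge 1$ for all distinct $\gamma_1,\gamma_2\in\Gamma$. For $R\ge 2$ let $B_\Gamma(0,R)=\{\gamma\in\Gamma: d_G(0,\gamma)<R\}$, where $0$ is the identity of $G$. Then $(B_\Gamma(0,R),d_G)$ admits an embedding into $\mathbb{R}^{D_G}$ with distortion $O_G(\log^{1/2}R)$.
   Context: A Carnot group $G$ is a connected, simply connected Lie group with stratified Lie algebra $\mathfrak g=V_1\oplus\cdots\oplus V_s$, $V_{r+1}=[V_1,V_r]$, $V_{s+1}=0$, with a norm on $V_1$; $d_G$ is the associated Carnot–Carathéodory distance (infimum of lengths of horizontal piecewise smooth curves). A map $f:(X,d_X)\to(Y,d_Y)$ has distortion at most $D$ if there is $C>0$ with $Cd_X(x_1,x_2)\le d_Y(f(x_1),f(x_2))\le CDd_X(x_1,x_2)$ for all $x_1,x_2$. *)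

From HB Require Import structures.
From mathcomp Require Import all_boot all_order all_algebra.
From mathcomp Require Import all_classical all_reals all_analysis.
Set Implicit Arguments. Unset Strict Implicit. Unset Printing Implicit Defensive.
Import Order.TTheory GRing.Theory Num.Theory.
Import numFieldNormedType.Exports.
Local Open Scope classical_set_scope.
Local Open Scope ring_scope.

Fixpoint Ck (R : realType) (V W : normedModType R) (k : nat) (f : V -> W) : Prop :=
  match k with
  | 0 => continuous f
  | k'.+1 => (forall x v, derivable f x v) /\
             (forall v, @Ck R V W k' (fun x => 'D_v f x))
  end.

Definition smooth (R : realType) (V W : normedModType R) (f : V -> W) :=
  forall k, @Ck R V W k f.

Definition is_group_law (R : realType) (n : nat)
  (mul : 'rV[R]_n -> 'rV[R]_n -> 'rV[R]_n) (inv : 'rV[R]_n -> 'rV[R]_n) :=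
  [/\ associative mul, left_id 0 mul, right_id 0 mul,
      (forall x, mul (inv x) x = 0) & (forall x, mul x (inv x) = 0)].

(* Lie bracket of the Lie algebra T_0 G = R^n: mixed second derivative of
   the (group) commutator expression at the identity. *)
Definition bracket (R : realType) (n : nat)
  (mul : 'rV[R]_n -> 'rV[R]_n -> 'rV[R]_n) (x y : 'rV[R]_n) : 'rV[R]_n :=
  derive1 (fun s : R => derive1 (fun t : R =>
     mul (s *: x) (t *: y) - mul (t *: y) (s *: x)) 0) 0.

Definition dL (R : realType) (n : nat)
  (mul : 'rV[R]_n -> 'rV[R]_n -> 'rV[R]_n) (g v : 'rV[R]_n) : 'rV[R]_n :=
  derive1 (fun t : R => mul g (t *: v)) 0.

(* Carnot group structure on R^n (exponential coordinates):
   - mul is a smooth group law with identity 0 (so G is a connected, simply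
     connected Lie group);
   - lines through 0 are one-parameter subgroups (exponential coordinates);
   - Lie algebra = V_1 (+) ... (+) V_s, V_{r+1} = [V_1, V_r], V_{s+1} = 0;
   - N is a norm on V_1. *)
Definition is_carnot (R : realType) (n : nat)
  (mul : 'rV[R]_n -> 'rV[R]_n -> 'rV[R]_n) (inv : 'rV[R]_n -> 'rV[R]_n)
  (s : nat) (Vs : nat -> {vspace 'rV[R]_n}) (N : 'rV[R]_n -> R) : Prop :=
  [/\ is_group_law mul inv,
      smooth (fun z : 'rV[R]_(n + n) => mul (lsubmx z) (rsubmx z)),
      (forall x (a b : R), mul (a *: x) (b *: x) = (a + b) *: x),
      (1 <= s)%N &
   [/\ [/\ (\sum_(1 <= r < s.+1) Vs r)%VS = fullv,
          \dim (\sum_(1 <= r < s.+1) Vs r)%VS = (\sum_(1 <= r < s.+1) \dim (Vs r))%N,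
          (forall r, (1 <= r <= s)%N ->
             Vs r.+1 = <<[seq bracket mul a b | a <- vbasis (Vs 1%N), b <- vbasis (Vs r)]>>%VS)
        & Vs s.+1 = 0%VS] &
      [/\ (forall a b, a \in Vs 1%N -> b \in Vs 1%N -> N (a + b) <= N a + N b),
          (forall (c : R) a, a \in Vs 1%N -> N (c *: a) = `|c| * N a)
        & (forall a, a \in Vs 1%N -> N a = 0 -> a = 0)]]].

(* Breakpoints
   0 = p_0 < p_1 < ... < p_k = 1 with (p_1,...,p_k) = tt; on the i-th piece
   gam'(t) = dL_{gam t} (h i t) with h i a continuous V_1-valued control. *)
Definition piece (R : realType) (tt : seq R) (i : nat) : set R :=
  [set t | nth 0 (0 :: tt) i <= t <= nth 0 (0 :: tt) i.+1].

Definition opiece (R : realType) (tt : seq R) (i : nat) : set R :=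
  [set t | nth 0 (0 :: tt) i < t < nth 0 (0 :: tt) i.+1].

Definition horizontal (R : realType) (n : nat)
  (mul : 'rV[R]_n -> 'rV[R]_n -> 'rV[R]_n) (V1 : {vspace 'rV[R]_n})
  (gam : R -> 'rV[R]_n) (tt : seq R) (h : nat -> R -> 'rV[R]_n) : Prop :=
  [/\ path <%R 0 tt, last 0 tt = 1,
      {within [set t : R | 0 <= t <= 1], continuous gam} &
      forall i, (i < size tt)%N ->
        [/\ {within piece tt i, continuous (h i)},
            (forall t, piece tt i t -> h i t \in V1) &
            (forall t, opiece tt i t -> is_derive t 1 gam (dL mul (gam t) (h i t)))]].

Definition hlength (R : realType) (n : nat) (N : 'rV[R]_n -> R)
  (tt : seq R) (h : nat -> R -> 'rV[R]_n) : R :=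
  \sum_(i < size tt) Rintegral lebesgue_measure (piece tt i) (fun t => N (h i t)).

Definition ccdist (R : realType) (n : nat)
  (mul : 'rV[R]_n -> 'rV[R]_n -> 'rV[R]_n) (Vs : nat -> {vspace 'rV[R]_n})
  (N : 'rV[R]_n -> R) (x y : 'rV[R]_n) : R :=
  inf [set l : R | exists gam tt h,
        [/\ gam 0 = x, gam 1 = y, horizontal mul (Vs 1%N) gam tt h
          & l = hlength N tt h]].

Definition enorm (R : realType) (D : nat) (v : 'rV[R]_D) : R :=
  Num.sqrt (\sum_(i < D) v ord0 i ^+ 2).

Definition distortion_le (R : realType) (X : Type) (D : nat) (A : set X)
  (dX : X -> X -> R) (f : X -> 'rV[R]_D) (K : R) : Prop :=
  exists c : R, 0 < c /\ forall x y, A x -> A y ->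
    c * dX x y <= enorm (f x - f y) <= c * K * dX x y.

Definition sep_discrete_subgroup (R : realType) (n : nat)
  (mul : 'rV[R]_n -> 'rV[R]_n -> 'rV[R]_n) (inv : 'rV[R]_n -> 'rV[R]_n)
  (d : 'rV[R]_n -> 'rV[R]_n -> R) (Gam : set 'rV[R]_n) : Prop :=
  [/\ Gam 0,
      (forall x y, Gam x -> Gam y -> Gam (mul x y)),
      (forall x, Gam x -> Gam (inv x)),
      (forall x, Gam x -> exists2 e : R, 0 < e &
         forall y, Gam y -> ball x e y -> y = x) &
      (forall x y, Gam x -> Gam y -> x <> y -> 1 <= d x y)].

From HB Require Import structures.
From mathcomp Require Import all_boot all_order all_algebra.
From mathcomp Require Import all_classical all_reals all_analysis.
From mathcomp Require Import ring lra.
Set Implicit Arguments. Unset Strict Implicit. Unset Printing Implicit Defensive.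
Import Order.TTheory GRing.Theory Num.Theory.
Local Open Scope classical_set_scope.
Local Open Scope ring_scope.

(* If f embeds (G, d^(1-eps)) into R^D with distortion K, and A is a set on
   which distinct points satisfy 1 <= d <= Delta, then on A we have
   d^(1-eps) <= d <= Delta^eps d^(1-eps), so f restricted to A is bi-Lipschitz
   for d with distortion Delta^eps K.  For the ball of radius r of the
   1-separated subgroup Gamma, Delta = O(r) and eps = 1/(ln r + 3) give
   Delta^eps = O(1) and K = O(eps^(-1/2)) = O(sqrt (ln r)). *)

Section euclidean_norm.
Variable R : realType.

Lemma lagrange_identity (I : finType) (u v : I -> R) :
  2 * ((\sum_i u i ^+ 2) * (\sum_i v i ^+ 2) - (\sum_i u i * v i) ^+ 2)
  = \sum_i \sum_j (u i * v j - u j * v i) ^+ 2.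
Proof.
have double_sum (a b : I -> R) :
    (\sum_i a i) * (\sum_j b j) = \sum_i \sum_j a i * b j.
  by rewrite mulr_suml; apply: eq_bigr => i _; rewrite mulr_sumr.
have -> : \sum_i \sum_j (u i * v j - u j * v i) ^+ 2 =
    \sum_i \sum_j u i ^+ 2 * v j ^+ 2 + \sum_i \sum_j v i ^+ 2 * u j ^+ 2
    - 2 * \sum_i \sum_j (u i * v i) * (u j * v j).
  rewrite mulr_sumr -big_split -sumrB; apply: eq_bigr => i _.
  by rewrite mulr_sumr -big_split -sumrB; apply: eq_bigr => j _ /=; ring.
rewrite -!double_sum expr2; ring.
Qed.

Lemma cauchy_schwarz (I : finType) (u v : I -> R) :
  \sum_i u i * v i <= Num.sqrt (\sum_i u i ^+ 2) * Num.sqrt (\sum_i v i ^+ 2).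
Proof.
have sq_ge0 (w : I -> R) : 0 <= \sum_i w i ^+ 2.
  by apply: sumr_ge0 => i _; exact: sqr_ge0.
rewrite -sqrtrM ?sq_ge0 // (le_trans (ler_norm _)) // -sqrtr_sqr ler_sqrt.
  have := lagrange_identity u v.
  have : 0 <= \sum_i \sum_j (u i * v j - u j * v i) ^+ 2.
    by apply: sumr_ge0 => i _; exact: sq_ge0.
  by move=> + E; rewrite -E pmulr_rge0 // subr_ge0.
by rewrite mulr_ge0 ?sq_ge0.
Qed.

Variable D : nat.

Lemma enorm0 : enorm (0 : 'rV[R]_D) = 0.
Proof. by rewrite /enorm big1 ?sqrtr0 // => i _; rewrite mxE expr0n. Qed.

Lemma enormC (u v : 'rV[R]_D) : enorm (u - v) = enorm (v - u).
Proof.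
by rewrite -opprB /enorm; congr Num.sqrt; apply: eq_bigr => i _; rewrite mxE sqrrN.
Qed.

Lemma enormD (u v : 'rV[R]_D) : enorm (u + v) <= enorm u + enorm v.
Proof.
have sq_ge0 (w : 'rV[R]_D) : 0 <= \sum_i w ord0 i ^+ 2.
  by apply: sumr_ge0 => i _; exact: sqr_ge0.
have CS := cauchy_schwarz (fun i => u ord0 i) (fun i => v ord0 i).
have expand : \sum_i (u + v) ord0 i ^+ 2 = \sum_i u ord0 i ^+ 2
    + 2 * \sum_i u ord0 i * v ord0 i + \sum_i v ord0 i ^+ 2.
  by rewrite mulr_sumr -!big_split; apply: eq_bigr => i _ /=; rewrite mxE; ring.
rewrite /enorm -[X in _ <= X]ger0_norm ?addr_ge0 ?sqrtr_ge0 //.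
rewrite -sqrtr_sqr ler_sqrt ?sqr_ge0 // sqrrD !sqr_sqrtr ?sq_ge0 // expand -mulr_natr.
lra.
Qed.

Lemma enorm_triangle (u v w : 'rV[R]_D) :
  enorm (v - w) <= enorm (u - v) + enorm (u - w).
Proof.
have -> : v - w = (v - u) + (u - w) by rewrite addrA subrK.
by rewrite (le_trans (enormD _ _)) // enormC.
Qed.

End euclidean_norm.

Lemma distortion_le_mono (R : realType) (X : Type) (D : nat) (A B : set X)
    (dX : X -> X -> R) (f : X -> 'rV[R]_D) (K K' : R) :
  B `<=` A -> (forall x y, B x -> B y -> 0 <= dX x y) -> K <= K' ->
  distortion_le A dX f K -> distortion_le B dX f K'.
Proof.
move=> BA dX_ge0 KK' [c [c_gt0 hf]]; exists c; split => // x y Bx By.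
have /andP[-> up] := hf x y (BA x Bx) (BA y By); rewrite (le_trans up) //.
by rewrite ler_wpM2r ?dX_ge0 // ler_wpM2l // ltW.
Qed.

(* Consequences for a function d of a snowflake embedding of (X, d^a):
   although d is not assumed to be a metric, it vanishes on the diagonal and
   obeys a quasi-triangle inequality controlling diameters of balls. *)
Section snowflake_quasimetric.
Variables (R : realType) (X : Type) (D : nat) (d : X -> X -> R).
Variables (f : X -> 'rV[R]_D) (a K : R).
Hypothesis f_snowflake : distortion_le setT (fun x y => powR (d x y) a) f K.

(* An embedding with positive lower constant sends x, x to 0, so d x x = 0. *)
Lemma snowflake_dist_refl x : d x x = 0.
Proof.
have [c [c_gt0 hf]] := f_snowflake; have /andP[lo _] := hf x x I I.
apply: (@powR_eq0_eq0 _ _ a); apply/eqP; rewrite eq_le powR_ge0 andbT.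
by rewrite -(pmulr_rle0 _ c_gt0) (le_trans lo) // subrr enorm0.
Qed.

Lemma separated_dist_ge0 (Gam : set X) :
  (forall x y, Gam x -> Gam y -> x <> y -> 1 <= d x y) ->
  forall x y, Gam x -> Gam y -> 0 <= d x y.
Proof.
move=> Gam_sep x y Gx Gy; have [<-|xy] := pselect (x = y).
  by rewrite snowflake_dist_refl.
by rewrite (le_trans ler01) // Gam_sep.
Qed.

Hypotheses (a_gt0 : 0 < a) (K_ge0 : 0 <= K).

Lemma snowflake_diameter x y z r :
  0 <= d x y -> 0 <= d z x <= r -> 0 <= d z y <= r ->
  d x y <= powR (2 * K) a^-1 * r.
Proof.
move=> dxy_ge0 /andP[dzx_ge0 dzx_le] /andP[dzy_ge0 dzy_le].
have [c [c_gt0 hf]] := f_snowflake.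
have r_ge0 : 0 <= r := le_trans dzx_ge0 dzx_le.
have pow_mono t : 0 <= t -> t <= r -> powR t a <= powR r a.
  by move=> t_ge0 t_le; apply: ge0_ler_powR; rewrite ?nnegrE // ltW.
have cK_ge0 : 0 <= c * K by rewrite mulr_ge0 // ltW.
have up_x : enorm (f z - f x) <= c * K * powR r a.
  have /andP[_ up] := hf z x I I.
  by rewrite (le_trans up) // ler_wpM2l // pow_mono.
have up_y : enorm (f z - f y) <= c * K * powR r a.
  have /andP[_ up] := hf z y I I.
  by rewrite (le_trans up) // ler_wpM2l // pow_mono.
have snow_le : powR (d x y) a <= 2 * K * powR r a.
  have /andP[lo _] := hf x y I I.
  rewrite -(ler_pM2l c_gt0) (le_trans lo) // (le_trans (enorm_triangle (f z) _ _)) //.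
  lra.
have a_neq0 : a != 0 by rewrite gt_eqF.
have inv_ge0 : 0 <= a^-1 by rewrite invr_ge0 ltW.
have -> : d x y = powR (powR (d x y) a) a^-1 by rewrite -powRrM mulfV // powRr1.
rewrite (le_trans (ge0_ler_powR inv_ge0 _ _ snow_le)) ?nnegrE ?powR_ge0 //.
  by rewrite !mulr_ge0 ?powR_ge0.
by rewrite powRM ?mulr_ge0 ?powR_ge0 // -powRrM mulfV // powRr1.
Qed.

Lemma separated_ball_dist (Gam : set X) (o : X) (r : R) :
  Gam o -> (forall x y, Gam x -> Gam y -> x <> y -> 1 <= d x y) ->
  forall x y, Gam x /\ d o x < r -> Gam y /\ d o y < r -> x <> y ->
  1 <= d x y <= powR (2 * K) a^-1 * r.
Proof.
move=> Go Gam_sep x y [Gx rx] [Gy ry] xy; rewrite Gam_sep //=.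
have d_ge0 := separated_dist_ge0 Gam_sep.
have hx : 0 <= d o x <= r by rewrite d_ge0 ?ltW.
have hy : 0 <= d o y <= r by rewrite d_ge0 ?ltW.
exact: snowflake_diameter (d_ge0 x y Gx Gy) hx hy.
Qed.

End snowflake_quasimetric.

(* The key comparison: on a set whose distinct points are at distance in
   [1, Delta], a (1 - eps)-snowflake embedding with distortion K is
   bi-Lipschitz for d with distortion Delta^eps K, because there
   d^(1-eps) <= d <= Delta^eps d^(1-eps). *)
Lemma separated_snowflake_bilipschitz (R : realType) (X : Type) (D : nat)
    (A : set X) (d : X -> X -> R) (f : X -> 'rV[R]_D) (eps K Delta : R) :
  0 <= eps <= 1 -> 0 <= K -> 0 < Delta ->
  (forall x, A x -> d x x = 0) ->
  (forall x y, A x -> A y -> x <> y -> 1 <= d x y <= Delta) ->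
  distortion_le A (fun x y => powR (d x y) (1 - eps)) f K ->
  distortion_le A d f (powR Delta eps * K).
Proof.
move=> /andP[eps_ge0 eps_le1] K_ge0 Delta_gt0 d_refl d_sep [c [c_gt0 hf]].
have De_gt0 : 0 < powR Delta eps by exact: powR_gt0.
exists (c / powR Delta eps); split; first by rewrite divr_gt0.
move=> x y Ax Ay; have [<-|xy] := pselect (x = y).
  by rewrite d_refl // subrr enorm0 !mulr0 lexx.
have /andP[d_ge1 d_le] := d_sep x y Ax Ay xy.
have /andP[lo up] := hf x y Ax Ay.
set P := powR (d x y) (1 - eps) in lo up *.
have P_ge0 : 0 <= P by exact: powR_ge0.
have P_le : P <= d x y by apply: ler1_powR; lra.
have d_split : d x y = powR (d x y) eps * P.
  rewrite -powRD; first by rewrite addrC subrK powRr1 //; lra.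
  by apply/implyP => _; rewrite gt_eqF // (lt_le_trans ltr01).
have de_le : powR (d x y) eps <= powR Delta eps.
  by apply: ge0_ler_powR; rewrite ?nnegrE //; lra.
apply/andP; split.
  rewrite (le_trans _ lo) // {1}d_split mulrA ler_wpM2r //.
  by rewrite -(ler_pM2r De_gt0) mulrAC divfK ?gt_eqF // ler_wpM2l // ltW.
rewrite (le_trans up) // mulrA divfK ?gt_eqF //.
by rewrite ler_wpM2l // mulr_ge0 // ltW.
Qed.

Lemma powR_log_damped (R : realType) (B r : R) :
  1 <= B -> 1 <= r -> powR (B * r) (ln r + 3)^-1 <= B * expR 1.
Proof.
move=> B_ge1 r_ge1.
have ln_ge0 : 0 <= ln r := ln_ge0 r_ge1.
set eps := (ln r + 3)^-1.
have eps_L : eps * (ln r + 3) = 1 by rewrite mulVf // gt_eqF //; lra.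
have eps_ge0 : 0 <= eps by rewrite invr_ge0; lra.
rewrite powRM; [|lra|lra].
apply: ler_pM; rewrite ?powR_ge0 //.
  by apply: ler1_powR => //; nra.
by rewrite /powR gt_eqF ?ler_expR; [nra|lra].
Qed.

(* ln 2 >= 1/2, from exp x >= 1 + x at x = - ln 2. *)
Lemma ln_ge_half (R : realType) (r : R) : 2 <= r -> 2^-1 <= ln r.
Proof.
move=> r_ge2; have := expR_ge1Dx (- ln (2 : R)).
rewrite expRN lnK ?posrE // => ln2_ge.
by rewrite (@le_trans _ _ (ln 2)) ?ler_ln ?posrE //; lra.
Qed.

(* The distortion O(eps^(-1/2)) at eps = 1/(ln r + 3) is O(sqrt (ln r)). *)
Lemma sqrt_ln_shift (R : realType) (r : R) :
  2 <= r -> Num.sqrt (ln r + 3) <= Num.sqrt 7 * Num.sqrt (ln r).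
Proof.
move=> r_ge2; have ln_half := ln_ge_half r_ge2.
by rewrite -sqrtrM ?ler_sqrt; lra.
Qed.

Lemma inv_log_exponent (R : realType) (r : R) :
  1 <= r -> 0 < (ln r + 3)^-1 < 1 / 2.
Proof.
move=> r_ge1; have ln_ge0 : 0 <= ln r := ln_ge0 r_ge1.
have eps_L : (ln r + 3)^-1 * (ln r + 3) = 1 by rewrite mulVf // gt_eqF //; lra.
have eps_gt0 : 0 < (ln r + 3)^-1 by rewrite invr_gt0; lra.
by apply/andP; split => //; nra.
Qed.

(* Final bookkeeping of constants: with eps = 1/(ln r + 3), the distortion
   Delta^eps K obtained for Delta = B r and K = |C| eps^(-1/2) is at most
   (B e |C| sqrt 7) sqrt (ln r). *)
Lemma log_scale_distortion (R : realType) (B r C : R) :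
  1 <= B -> 2 <= r ->
  powR (B * r) (ln r + 3)^-1 * (`|C| * Num.sqrt (ln r + 3))
    <= B * expR 1 * `|C| * Num.sqrt 7 * Num.sqrt (ln r).
Proof.
move=> B_ge1 r_ge2.
have -> : B * expR 1 * `|C| * Num.sqrt 7 * Num.sqrt (ln r)
    = B * expR 1 * (`|C| * (Num.sqrt 7 * Num.sqrt (ln r))) by rewrite !mulrA.
apply: ler_pM; rewrite ?powR_ge0 ?mulr_ge0 ?sqrtr_ge0 //.
  by apply: powR_log_damped => //; lra.
by rewrite ler_wpM2l // sqrt_ln_shift.
Qed.

Theorem mainTheorem2 (R : realType) (n : nat)
  (mul : 'rV[R]_n -> 'rV[R]_n -> 'rV[R]_n) (inv : 'rV[R]_n -> 'rV[R]_n)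
  (s : nat) (Vs : nat -> {vspace 'rV[R]_n}) (N : 'rV[R]_n -> R)
  (D : nat) (C0 : R) :
  is_carnot mul inv s Vs N ->
  (forall eps : R, 0 < eps < 1 / 2 ->
     exists f : 'rV[R]_n -> 'rV[R]_D,
       distortion_le setT (fun x y => powR (ccdist mul Vs N x y) (1 - eps)) f
         (C0 / Num.sqrt eps)) ->
  exists C : R, forall (Gam : set 'rV[R]_n) (r : R),
    sep_discrete_subgroup mul inv (ccdist mul Vs N) Gam -> 2 <= r ->
    exists f : 'rV[R]_n -> 'rV[R]_D,
      distortion_le [set g | Gam g /\ ccdist mul Vs N 0 g < r]
        (ccdist mul Vs N) f (C * Num.sqrt (ln r)).
Proof.
move=> _ snowflake_emb; set d := ccdist mul Vs N.
(* The 3/4-snowflake embedding bounds the diameter of balls of Gamma. *)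
have [|f0 f0_snow] := snowflake_emb 4^-1; first lra.
set M := `|C0 / Num.sqrt 4^-1| in f0_snow.
have {}f0_snow : distortion_le setT (fun x y => powR (d x y) (1 - 4^-1)) f0 M.
  apply: distortion_le_mono f0_snow => // [x y _ _|]; first exact: powR_ge0.
  exact: ler_norm.
have quarter_gt0 : 0 < 1 - 4^-1 :> R by lra.
pose B := Num.max 1 (powR (2 * M) (1 - 4^-1)^-1).
exists (B * expR 1 * `|C0| * Num.sqrt 7) => Gam r [Gam0 _ _ _ Gam_sep] r_ge2.
set ball := [set g | Gam g /\ d 0 g < r].
have ball_dist x y : ball x -> ball y -> x <> y -> 1 <= d x y <= B * r.
  move=> bx bx' xy; have /andP[-> le_diam] := separated_ball_dist f0_snow
    quarter_gt0 (normr_ge0 _) Gam0 Gam_sep bx bx' xy.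
  by rewrite (le_trans le_diam) // ler_wpM2r ?le_max ?lexx ?orbT //; lra.
have /andP[eps_gt0 eps_lt] := @inv_log_exponent R r ltac:(lra).
have [|f f_snow] := snowflake_emb (ln r + 3)^-1; first exact/andP.
exists f.
have {}f_snow : distortion_le ball (fun x y => powR (d x y) (1 - (ln r + 3)^-1))
    f (`|C0| * Num.sqrt (ln r + 3)).
  apply: distortion_le_mono f_snow => // [x y _ _|]; first exact: powR_ge0.
  by rewrite sqrtrV ?invrK ?ler_wpM2r ?sqrtr_ge0 ?ler_norm // -invr_ge0 ltW.
have eps_le1 : 0 <= (ln r + 3)^-1 <= 1 by apply/andP; split; lra.
have B_ge1 : 1 <= B by rewrite le_max lexx.
have Br_gt0 : 0 < B * r by rewrite mulr_gt0 //; lra.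
have f_lip := separated_snowflake_bilipschitz eps_le1
  (mulr_ge0 (normr_ge0 C0) (sqrtr_ge0 _)) Br_gt0
  (fun x _ => snowflake_dist_refl f0_snow x) ball_dist f_snow.
apply: distortion_le_mono f_lip => //; last exact: log_scale_distortion.
by move=> x y [Gx _] [Gy _]; exact (separated_dist_ge0 f0_snow Gam_sep Gx Gy).
Qed.
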